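(* Let $G$ be a finite $4$-valent graph (loops and multiple edges allowed) embedded in the plane, and let $P$ be a face (polygon) of this embedding. Then no two sides of $P$ are the same edge of $G$; that is, no edge of $G$ occurs twice in the boundary of $P$.
   Context: A polygon in a planar graph is a face of the planar embedding; its sides are the edges traversed along its boundary. *)

From mathcomp Require Import all_boot.
Set Implicit Arguments. Unset Strict Implicit. Unset Printing Implicit Defensive.

(* A finite graph embedded in an oriented surface is encoded as a combinatorial
   map (rotation system) on a finite set D of darts (half-edges):
   - e : D -> D, a fixed-point-free involution; its orbits {x, e x} are the edges;
   - n : D -> D, a permutation; its orbits are the vertices (cyclic order of
     darts around the vertex); the degree of the vertex of x is order n x;
   - the faces are the orbits of the face permutation  f := n \o e  :
     going along a face boundary, the dart x is the side (edge {x, e x})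
     traversed and n (e x) is the next side.
   Loops (e x in the n-orbit of x) and multiple edges are allowed. *)

Section CombMap.
Variables (D : finType) (e n : D -> D).

Definition edge_perm_ok := involutive e /\ (forall x, e x != x).
Definition face_perm : D -> D := fun x => n (e x).

Definition glink : rel D :=
  [rel x y | [|| y == e x, y == n x, x == e y | x == n y]].

Definition num_vertices := fcard n D.
Definition num_edges := fcard e D.
Definition num_faces := fcard face_perm D.
Definition num_components := n_comp glink D.

(* planarity: every connected component is embedded in the sphere (genus 0),
   i.e. Euler's formula V - E + F = 2 C (written additively in nat). *)
Definition planar_map :=
  num_vertices + num_faces = num_edges + 2 * num_components.

Definition four_valent := forall x : D, order n x = 4.

Definition same_edge (x y : D) := (y == x) || (y == e x).

Definition in_face (p x : D) := fconnect face_perm p x.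
End CombMap.

(* Suppose a dart x and its reverse e x lie on the same face.  Cut the edge
   {x, e x} into two loose half-edges, i.e. replace e by e' := e \o (x e x),
   which fixes x and e x.  This creates one more edge orbit and, since x and
   e x lie on one face, splits that face in two.  The edge is no bridge:
   otherwise the component S of x in the cut graph avoids e x; S is a union
   of vertices, all of even degree, so #|S| is even, whereas S minus x is a
   union of edges {y, e y}, so #|S| is odd.  Hence V and C are unchanged
   while E and F grow by one, and planarity V + F = E + 2C together with
   |D| = 2E gives V + E' + F' = |D| + 2C + 2.  This contradicts the Euler
   inequality V + E + F <= |D| + 2C (nonnegative genus), which holds for any
   two permutations e and n of D and is proved by induction on the number of
   darts moved by e. *)

From mathcomp Require Import all_boot fingroup perm zify.
Set Implicit Arguments. Unset Strict Implicit. Unset Printing Implicit Defensive.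

Section FcardTperm.
Variable D : finType.
Implicit Types (f : D -> D) (a b : D).

Lemma porbit_fconnect (s : {perm D}) x : porbit s x =i fconnect s x.
Proof.
move=> y; apply/porbitP/idP => [[i ->]|h].
  by rewrite permX; apply: fconnect_iter.
by exists (findex s x y); rewrite permX iter_findex.
Qed.

Lemma fcard_porbits (s : {perm D}) : fcard s D = #|porbits s|.
Proof.
have symf : connect_sym (frel s) := fconnect_sym (@perm_inj _ s).
have -> : porbits s = porbit s @: [set x | froots s x].
  apply/setP => O; apply/imsetP/imsetP => [[x _ ->]|[x _ ->]]; last by exists x.
  exists (froot s x); first by rewrite inE roots_root.
  apply/setP => y; rewrite !porbit_fconnect.
  by apply: same_connect => //; apply: connect_root.
rewrite card_in_imset => [|u v]; last first.
  rewrite !inE => /eqP ru /eqP rv /eqP; rewrite eq_porbit_mem porbit_fconnect.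
  by move=> h; rewrite -ru -rv; apply/rootP => //; rewrite symf.
by apply: eq_card => x; rewrite !inE andbT.
Qed.

Lemma fcard_comp_tperm f a b : injective f ->
  fcard (f \o tperm a b) D + (~~ fconnect f b a).*2 = fcard f D + (a != b).
Proof.
move=> finj; pose s := perm finj.
have sE : s =1 f by move=> z; rewrite permE.
have tsE : (tperm a b * s)%g =1 f \o tperm a b by move=> z; rewrite permM permE.
have := porbits_mul_tperm s a b; rewrite /= -!fcard_porbits porbit_fconnect.
by rewrite (eq_fcard tsE) (eq_fcard sE) -topredE /= (eq_fconnect sE).
Qed.

Lemma fcard_comp_tperm_connected f a b :
  injective f -> fconnect f b a -> a != b -> fcard (f \o tperm a b) D = (fcard f D).+1.
Proof.
move=> finj fba neq_ab.
by have := fcard_comp_tperm a b finj; rewrite fba neq_ab addn0 addn1.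
Qed.

End FcardTperm.

Section MergeComponents.
Variables (D : finType) (r s : rel D) (a b : D).
Hypotheses (r_sym : connect_sym r) (s_sym : connect_sym s).

Let near z := connect r z a || connect r z b.

Hypothesis s_sub_r_near : forall x y, s x y -> connect r x y || near x && near y.

Lemma near_connect x y : connect r x y -> near y -> near x.
Proof. by rewrite /near => rxy /orP[] /(connect_trans rxy) ->; rewrite ?orbT. Qed.

Lemma connect_sub_r_near x y : connect s x y -> connect r x y || near x && near y.
Proof.
case/connectP => p sp ->{y}; elim: p x sp => [|z p IHp] x /=; first by rewrite connect0.
case/andP => /s_sub_r_near sxz /IHp.
case/orP: sxz => [rxz|/andP[nx nz]] /orP[rzy|/andP[nz' ny]].
- by rewrite (connect_trans rxz rzy).
- by rewrite (near_connect rxz nz') ny orbT.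
- by rewrite nx (near_connect (_ : connect r (last z p) z) nz) ?orbT // r_sym.
- by rewrite nx ny orbT.
Qed.

Lemma n_comp_le_merge : n_comp r D <= n_comp s D + 1.
Proof.
pose S := [set x | roots r x] :\ root r b.
have -> : n_comp r D = #|S| + 1.
  transitivity #|[set x | roots r x]|.
    by apply: eq_card => x; rewrite !inE andbT.
  have rb : root r b \in [set x | roots r x] by rewrite inE roots_root.
  by rewrite (cardsD1 (root r b)) rb addnC.
rewrite leq_add2r /n_comp_mem.
have near_a u : u \in S -> near u -> connect r u a.
  rewrite !inE => /andP[ub /eqP ru] /orP[//|rub].
  by move/(rootP r_sym): rub ub; rewrite ru => ->; rewrite eqxx.
have inj_root : {in S &, injective (root s)}.
  move=> u v uS vS /(rootP s_sym) /connect_sub_r_near/orP ruv.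
  have {}ruv : connect r u v.
    case: ruv => [//|/andP[nu nv]].
    by rewrite (connect_trans (near_a u uS nu)) // r_sym near_a.
  move: uS vS; rewrite !inE => /andP[_ /eqP <-] /andP[_ /eqP <-].
  exact/(rootP r_sym).
rewrite -(card_in_imset inj_root); apply/subset_leq_card/subsetP => _ /imsetP[u _ ->].
by rewrite inE roots_root.
Qed.

End MergeComponents.

Section Glink.
Variables (D : finType) (e n : D -> D).

Lemma glink_sym : connect_sym (glink e n).
Proof.
apply: sym_connect_sym => x y; rewrite /glink /=.
by case: (y == e x); case: (y == n x); case: (x == e y); case: (x == n y).
Qed.

Lemma glink_e x : glink e n x (e x).
Proof. by rewrite /glink /= eqxx. Qed.

Lemma glink_n x : glink e n x (n x).
Proof. by rewrite /glink /= eqxx orbT. Qed.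

Lemma connect_glink (r : rel D) : connect_sym r ->
    (forall x, connect r x (e x)) -> (forall x, connect r x (n x)) ->
  forall x y, connect (glink e n) x y -> connect r x y.
Proof.
move=> r_sym re rn x y; apply: connect_sub => {}x {}y.
by rewrite /glink /= => /or4P[] /eqP->; rewrite 1?[connect r (_ _) _]r_sym ?re ?rn.
Qed.

Lemma fconnect_face_perm_glink x y :
  fconnect (face_perm e n) x y -> connect (glink e n) x y.
Proof.
apply: connect_sub => {}x _ /eqP <-.
by apply: connect_trans (connect1 (glink_e x)) (connect1 (glink_n _)).
Qed.

End Glink.

Section CompTperm.
Variables (D : finType) (e n : D -> D) (a b : D).
Hypothesis e_ba : e b = a.

Let e' := e \o tperm a b.

Lemma connect_glink_comp_tperm x : connect (glink e n) x (e' x).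
Proof.
rewrite /e' /=; case: tpermP => [->|->|_ _]; rewrite ?e_ba ?connect0 //.
  by apply: connect_trans (connect1 (glink_e e n b)) _; rewrite e_ba connect1 ?glink_e.
by rewrite connect1 ?glink_e.
Qed.

Let near z := connect (glink e' n) z a || connect (glink e' n) z b.

Lemma connect_comp_tperm_e x : connect (glink e' n) x (e x) || near x && near (e x).
Proof.
have e'_ea : e' b = e a by rewrite /e' /= tpermR.
rewrite /near; have [->|xa] := eqVneq x a.
  apply/orP; right; rewrite connect0 /= -e'_ea; apply/orP; right.
  by rewrite glink_sym connect1 ?glink_e.
have [->|xb] := eqVneq x b; first by rewrite e_ba !connect0 !orbT.
have <- : e' x = e x by rewrite /e' /= tpermD // eq_sym.
by rewrite connect1 ?glink_e.
Qed.

Lemma glink_sub_comp_tperm x y : glink e n x y ->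
  connect (glink e' n) x y || near x && near y.
Proof.
rewrite {1}/glink /= => /or4P[] /eqP->.
- exact: connect_comp_tperm_e.
- by rewrite connect1 ?glink_n.
- by rewrite glink_sym andbC connect_comp_tperm_e.
- by rewrite glink_sym connect1 ?glink_n.
Qed.

Lemma num_components_comp_tperm_le :
  num_components e' n <= num_components e n + 1.
Proof.
exact: (n_comp_le_merge (@glink_sym _ _ _) (@glink_sym _ _ _) glink_sub_comp_tperm).
Qed.

Lemma num_components_comp_tperm : connect (glink e' n) a b ->
  num_components e' n = num_components e n.
Proof.
move=> cab; have near_a z : near z -> connect (glink e' n) z a.
  by case/orP=> // czb; rewrite (connect_trans czb) // glink_sym.
apply: eq_n_comp => x y; apply/idP/idP; apply: connect_glink => {x y}.
- exact: glink_sym.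
- exact: connect_glink_comp_tperm.
- by move=> x; rewrite connect1 ?glink_n.
- exact: glink_sym.
- move=> x; case/orP: (connect_comp_tperm_e x) => // /andP[/near_a xa /near_a exa].
  by rewrite (connect_trans xa) // glink_sym.
- by move=> x; rewrite connect1 ?glink_n.
Qed.

Lemma card_moved_comp_tperm : e a != a ->
  #|[pred z | e' z != z]| < #|[pred z | e z != z]|.
Proof.
move=> ea; rewrite [X in _ < X](cardD1 a) [a \in _]ea ltnS.
apply/subset_leq_card/subsetP => z.
rewrite !inE /e' /=; have [->|za] := eqVneq z a; first by rewrite tpermL e_ba eqxx.
have [zb|zb] := eqVneq z b; first by move=> _; rewrite zb e_ba eq_sym -zb za.
by rewrite tpermD // eq_sym.
Qed.

End CompTperm.

Section Euler.
Variable D : finType.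

Lemma euler_id_edges (e n : D -> D) : e =1 id -> injective n ->
  num_vertices n + num_edges e + num_faces e n = #|D| + 2 * num_components e n.
Proof.
move=> eE n_inj.
have -> : num_edges e = #|D| by rewrite /num_edges (eq_fcard eE) fcard_id.
have -> : num_faces e n = num_vertices n by apply: eq_fcard => z; rewrite /face_perm eE.
have -> : num_components e n = num_vertices n.
  apply: eq_n_comp => x y; apply/idP/idP; last first.
    by apply: connect_sub => {}x _ /eqP <-; apply/connect1/glink_n.
  apply: connect_glink => [|z|z]; first exact: fconnect_sym.
    by rewrite eE connect0.
  exact: fconnect1.
lia.
Qed.

Lemma euler_le_moved k (e n : D -> D) : injective e -> injective n ->
  #|[pred z | e z != z]| <= k ->
  num_vertices n + num_edges e + num_faces e n <= #|D| + 2 * num_components e n.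
Proof.
elim: k e => [|k IHk] e e_inj n_inj moved_e.
  rewrite euler_id_edges // => z; apply/eqP/negPn/negP => ez.
  by move: moved_e; rewrite leqn0 => /eqP/card0_eq/(_ z); rewrite inE ez.
have [a ea | fixed_e] := pickP [pred z | e z != z]; last first.
  by rewrite euler_id_edges // => z; apply/eqP/negbFE/fixed_e.
pose b := finv e a; have e_ba : e b = a by rewrite /b f_finv.
have neq_ab : a != b by apply: contraNneq ea => ab; rewrite {1}ab e_ba.
pose e' := e \o tperm a b.
have e'_inj : injective e' := inj_comp e_inj (@perm_inj _ _).
have IH := IHk e' e'_inj n_inj (leq_trans (card_moved_comp_tperm e_ba ea) moved_e).
have E' : num_edges e' = (num_edges e).+1.
  by apply: fcard_comp_tperm_connected; rewrite // -e_ba fconnect1.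
have F' : num_faces e n + (~~ fconnect (face_perm e' n) b a).*2 = num_faces e' n + 1.
  have faceE : face_perm e n =1 face_perm e' n \o tperm a b.
    by move=> z; rewrite /face_perm /e' /= tpermK.
  by rewrite /num_faces (eq_fcard faceE) fcard_comp_tperm ?neq_ab //; apply: inj_comp.
have [cab | ncab] := boolP (connect (glink e' n) a b).
  have : num_faces e n <= num_faces e' n + 1 by rewrite -F' leq_addr.
  rewrite -(num_components_comp_tperm e_ba cab) -/e'; lia.
have ncfab : ~~ fconnect (face_perm e' n) b a.
  by apply: contra ncab; rewrite glink_sym; apply: fconnect_face_perm_glink.
have := num_components_comp_tperm_le n e_ba.
by move: F'; rewrite ncfab -/e'; lia.
Qed.

Lemma euler_le (e n : D -> D) : injective e -> injective n ->
  num_vertices n + num_edges e + num_faces e n <= #|D| + 2 * num_components e n.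
Proof. by move=> e_inj n_inj; apply: (euler_le_moved e_inj n_inj (leqnn _)). Qed.

End Euler.

Section FixedPointFreeInvolution.
Variables (D : finType) (e : D -> D).
Hypothesis e_ok : edge_perm_ok e.

Lemma order_edge_perm z : fingraph.order e z = 2.
Proof.
case: e_ok => e_inv e_fix.
have cyc : fcycle e [:: z; e z] by rewrite /= e_inv !eqxx.
by rewrite (order_cycle cyc) ?mem_head //= inE eq_sym e_fix.
Qed.

Lemma num_edges_double : num_edges e * 2 = #|D|.
Proof.
case: (e_ok) => /inv_inj e_inj _.
apply: (fcard_order_set e_inj); last by move=> u v _; rewrite !inE.
by apply/subsetP => z _; rewrite inE order_edge_perm.
Qed.

End FixedPointFreeInvolution.

Section EvenRegularNoBridge.
Variables (D : finType) (e n : D -> D) (k : nat).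
Hypotheses (e_ok : edge_perm_ok e) (n_inj : injective n).
Hypotheses (k_even : ~~ odd k) (n_regular : forall z, fingraph.order n z = k).

Lemma connect_cut_edge_even_regular x : connect (glink (e \o tperm x (e x)) n) x (e x).
Proof.
case: (e_ok) => e_inv _; have e_inj := inv_inj e_inv.
pose e' := e \o tperm x (e x); pose S := connect (glink e' n) x.
suff : e x \in S by [].
apply/idPn => ex_notin_S.
have S_closed : closed (glink e' n) S := connect_closed (@glink_sym _ _ _) x.
have card_S : fcard n S * k = #|S|.
  apply: (fcard_order_set n_inj); first by apply/subsetP => z _; rewrite inE n_regular.
  by move=> u _ /eqP <-; apply: S_closed (glink_n _ _ u).
pose S' := [predD1 S & x].
have S'_closed : fclosed e S'.
  apply: (intro_closed (fconnect_sym e_inj)) => u _ /eqP <- /andP[ux Su]; rewrite !inE.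
  have uex : u != e x by apply: contraNneq ex_notin_S => <-.
  have e'u : e' u = e u by rewrite /e' /= tpermD // eq_sym.
  rewrite -(inj_eq e_inj) e_inv uex -e'u -[S _]/(_ \in S).
  by rewrite -(S_closed u _ (glink_e e' n u)).
have card_S' : fcard e S' * 2 = #|S'|.
  apply: (fcard_order_set e_inj) S'_closed.
  by apply/subsetP => z _; rewrite inE order_edge_perm.
have := congr1 odd card_S; rewrite (cardD1 x) [x \in S]connect0 -card_S' /=.
by rewrite !oddM (negbTE k_even) andbF andbF.
Qed.

End EvenRegularNoBridge.

Theorem lemma2p6 (D : finType) (e n : D -> D) :
  edge_perm_ok e -> injective n ->
  planar_map e n -> four_valent n ->
  forall (p x y : D), in_face e n p x -> in_face e n p y -> x != y ->
    ~~ same_edge e x y.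
Proof.
move=> e_ok n_inj planar four_reg p x y px py xy.
rewrite /same_edge eq_sym (negbTE xy) /=; apply/negP => /eqP y_ex; subst y.
case: (e_ok) => e_inv _; have e_inj := inv_inj e_inv.
have face_inj : injective (face_perm e n) := inj_comp n_inj e_inj.
have face_x_ex : fconnect (face_perm e n) (e x) x.
  by apply: connect_trans px; rewrite fconnect_sym.
pose e' := e \o tperm x (e x).
have := @euler_le _ e' n (inj_comp e_inj (@perm_inj _ _)) n_inj.
have -> : num_edges e' = (num_edges e).+1.
  by apply: fcard_comp_tperm_connected xy; rewrite // -{2}(e_inv x) fconnect1.
have -> : num_faces e' n = (num_faces e n).+1.
  exact: fcard_comp_tperm_connected face_x_ex xy.
have -> : num_components e' n = num_components e n.
  apply: num_components_comp_tperm (e_inv x) _.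
  by apply: (connect_cut_edge_even_regular (k := 4)).
move: planar; rewrite /planar_map -(num_edges_double e_ok); lia.
Qed.
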